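(* Let $P$ be a 6-stack and let $Q$ be a retract of $P$ that is a 4-tower. Then $P(0)\cap Q(0)\neq\emptyset$, where $Q(0)$ is the set of minimal elements of $Q$.
   Context: All posets are finite. For a poset $P$ and $p\in P$, the rank $r(p)$ of $p$ is the largest $m$ such that there is a chain $p_0<\dots<p_m=p$ in $P$. $P$ is ranked of rank $r(P)$ if every maximal chain has exactly $r(P)+1$ elements. For $0\le i\le j$, $P(i,j)=\{p\in P:i\le r(p)\le j\}$, $P(i)=P(i,i)$ (induced order). A subset $Q\subseteq P$ (induced order) is a retract of $P$ if there is an order-preserving $f:P\to Q$ with $f(q)=q$ for all $q\in Q$. The 6-crown $C_6$ is the poset on $\{x_0,x_1,x_2,y_0,y_1,y_2\}$ whose only strict comparabilities are $x_0<y_0>x_1<y_1>x_2<y_2>x_0$. A 6-stack is a ranked poset $P$ of rank $n\ge1$ such that $P(i,i+1)\cong C_6$ for each $0\le i<n$. The ordinal sum of posets $P_1,\dots,P_k$ ($k\ge1$) is their disjoint union ordered by the orders of the $P_i$ together with $p<q$ whenever $p\in P_i,q\in P_j,i<j$. A 4-tower is an ordinal sum of one or more two-element antichains. *)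

From mathcomp Require Import all_boot all_order.
Set Implicit Arguments. Unset Strict Implicit. Unset Printing Implicit Defensive.
Import Order.TTheory.
Local Open Scope order_scope.

Section PosetDefs.
Context {disp : Order.disp_t} {T : finPOrderType disp}.

Definition has_chain (A : {set T}) (p : T) (m : nat) : bool :=
  [exists s : (m.+1).-tuple T,
     [&& all (fun x => x \in A) s, sorted <%O (s : seq T) & last p s == p]].

(* rank of p in the induced subposet A: the largest such m
   (strict chains have at most #|T| elements, so m < #|T|). *)
Definition rank_in (A : {set T}) (p : T) : nat :=
  \max_(m < #|T|) (if has_chain A p m then nat_of_ord m else 0%N).

Definition rank (p : T) : nat := rank_in setT p.

Definition rank_band (i j : nat) : {set T} :=
  [set p | (i <= rank p)%N && (rank p <= j)%N].
Definition level (i : nat) : {set T} := rank_band i i.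

(* Q(0) for a subset Q with the induced order: elements of rank 0 in Q,
   i.e. the minimal elements of Q. *)
Definition level0_in (Q : {set T}) : {set T} :=
  [set q in Q | rank_in Q q == 0%N].

Definition is_chain (C : {set T}) : Prop :=
  forall x y, x \in C -> y \in C -> (x <= y) || (y <= x).

Definition maximal_chain (C : {set T}) : Prop :=
  is_chain C /\ forall D : {set T}, is_chain D -> C \subset D -> D = C.

Definition ranked_of_rank (r : nat) : Prop :=
  forall C : {set T}, maximal_chain C -> #|C| = r.+1.

Definition iso_onto (U : finType) (leU : rel U) (S : {set T}) : Prop :=
  exists f : U -> T,
    [/\ injective f, (forall p, p \in S <-> exists u, f u = p)
      & forall u v, (f u <= f v) = leU u v].

End PosetDefs.

(* The 6-crown on 'I_6: 0,1,2 = x_0,x_1,x_2 and 3,4,5 = y_0,y_1,y_2, with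
   x_0<y_0>x_1<y_1>x_2<y_2>x_0, i.e. x_i < y_i and x_i < y_{i-1 mod 3}. *)
Definition crown6_le (a b : 'I_6) : bool :=
  (a == b) ||
  [&& (a < 3)%N, (3 <= b)%N &
      ((b - 3 == a)%N || (b - 3 == (a + 2) %% 3)%N)].

(* Ordinal sum of k two-element antichains, on 'I_k * bool:
   (i,b) <= (j,c) iff (i,b) = (j,c) or i < j. *)
Definition tower_le (k : nat) (u v : 'I_k * bool) : bool :=
  (u == v) || (u.1 < v.1)%N.

Section Stacks.
Context {disp : Order.disp_t} {T : finPOrderType disp}.
Local Open Scope order_scope.

Definition six_stack : Prop :=
  exists n : nat, (1 <= n)%N /\ @ranked_of_rank _ T n /\
    forall i, (i < n)%N -> iso_onto crown6_le (@rank_band _ T i i.+1).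

Definition four_tower (Q : {set T}) : Prop :=
  exists k : nat, (1 <= k)%N /\ iso_onto (@tower_le k) Q.

Definition retract (Q : {set T}) : Prop :=
  exists f : T -> T,
    [/\ forall x y, x <= y -> f x <= f y,
        forall x, f x \in Q
      & forall q, q \in Q -> f q = q].

End Stacks.

(* Let a, b be the bottom antichain of the 4-tower Q; they are the minimal
   elements of Q.  If neither has rank 0 in P, each lies above an element of
   rank 1, i.e. above a top element of the crown P(0,1), and any two top elements
   of a 6-crown have a common lower bound x.  A retraction onto Q maps x into Q
   below both a and b, forcing a = b. *)
From mathcomp Require Import all_boot all_order.
Set Implicit Arguments. Unset Strict Implicit. Unset Printing Implicit Defensive.
Import Order.TTheory.

Local Open Scope order_scope.

Lemma sorted_rcons2 (U : Type) (e : rel U) (s : seq U) (x y : U) :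
  sorted e (rcons (rcons s x) y) = sorted e (rcons s x) && e x y.
Proof. by case: s => [|z s] /=; rewrite ?andbT // rcons_path last_rcons. Qed.

Section Rank.
Context {disp : Order.disp_t} {T : finPOrderType disp}.
Implicit Types (A : {set T}) (p q : T).

Lemma has_chainP A p m :
  reflect (exists s : seq T, [/\ size s = m.+1, all (fun x => x \in A) s,
             sorted <%O s & last p s = p])
          (has_chain A p m).
Proof.
apply: (iffP existsP) => [[s /and3P[sA s_sorted /eqP s_last]]|[s [s_size sA s_sorted s_last]]].
  by exists (val s); split => //; exact: size_tuple.
have s_size' : size s == m.+1 by apply/eqP.
by exists (Tuple s_size'); apply/and3P; split => //=; apply/eqP.
Qed.

Lemma has_chain_mem A p m : has_chain A p m -> p \in A.
Proof.
case/has_chainP => s [s_size sA _ <-]; apply: (allP sA).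
by case: s s_size {sA} => // x s _; rewrite /= mem_last.
Qed.

Lemma has_chain0 A p : has_chain A p 0 = (p \in A).
Proof.
apply/idP/idP => [/has_chain_mem //|pA].
by apply/has_chainP; exists [:: p]; split => //=; rewrite pA.
Qed.

Lemma has_chain_rcons A p q m :
  has_chain A q m -> q < p -> p \in A -> has_chain A p m.+1.
Proof.
case/has_chainP => -[|x s] [//= s_size sA s_sorted s_last] qp pA.
apply/has_chainP; exists (rcons (x :: s) p); split.
- by rewrite size_rcons /= s_size.
- by rewrite all_rcons pA.
- by rewrite /= rcons_path s_sorted /= s_last.
- by rewrite last_rcons.
Qed.

Lemma has_chain_pred A p m :
  has_chain A p m.+1 -> exists2 q, q \in A & q < p /\ has_chain A q m.
Proof.
case/has_chainP => s []; case/lastP: s => [//|s z].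
rewrite size_rcons last_rcons all_rcons => -[s_size] /andP[_ sA] s_sorted <-.
case/lastP: s s_size sA s_sorted => [//|s q].
rewrite size_rcons all_rcons sorted_rcons2 => -[s_size] /andP[qA sA] /andP[s_sorted qz].
exists q => //; split => //; apply/has_chainP; exists (rcons s q); split => //.
- by rewrite size_rcons s_size.
- by rewrite all_rcons qA.
- by rewrite last_rcons.
Qed.

Lemma rank_in_gt0_chain A p : (0 < rank_in A p)%N -> has_chain A p (rank_in A p).
Proof.
move=> rank_gt0.
have [|i Ei] := @bigop.eq_bigmax 'I_#|T| (fun m => if has_chain A p m then nat_of_ord m else 0%N).
  by rewrite card_ord; apply/card_gt0P; exists p.
rewrite /rank_in Ei in rank_gt0 *.
by case: ifP rank_gt0 => // ->.
Qed.

Lemma has_chain_rank_in A p : p \in A -> has_chain A p (rank_in A p).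
Proof.
move=> pA; case: (posnP (rank_in A p)) => [->|]; first by rewrite has_chain0.
exact: rank_in_gt0_chain.
Qed.

Lemma has_chain_leq_rank_in A p m : has_chain A p m -> (m <= rank_in A p)%N.
Proof.
move=> pc; have m_lt : (m < #|T|)%N.
  case/has_chainP: pc => s [s_size _ s_sorted _].
  by rewrite -s_size -(card_uniqP (lt_sorted_uniq s_sorted)); exact: max_card.
by apply: leq_trans (leq_bigmax (Ordinal m_lt)); rewrite /= pc.
Qed.

Lemma rank_in_lt A p q : q \in A -> p \in A -> q < p -> (rank_in A q < rank_in A p)%N.
Proof.
move=> qA pA qp.
exact: has_chain_leq_rank_in (has_chain_rcons (has_chain_rank_in qA) qp pA).
Qed.

Lemma rank_in_pred A p m :
  rank_in A p = m.+1 -> exists2 q, q \in A & q < p /\ rank_in A q = m.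
Proof.
move=> pm; have pc : has_chain A p m.+1 by rewrite -pm rank_in_gt0_chain ?pm.
have [q qA [qp qc]] := has_chain_pred pc.
exists q => //; split => //; apply/eqP.
rewrite eqn_leq has_chain_leq_rank_in // andbT -ltnS -pm.
exact: rank_in_lt qA (has_chain_mem pc) qp.
Qed.

Lemma rank_in_eq0 A p : (forall q, q \in A -> ~~ (q < p)) -> rank_in A p = 0%N.
Proof.
move=> p_min; case pm: (rank_in A p) => [//|m].
by have [q qA [qp _]] := rank_in_pred pm; move: (p_min q qA); rewrite qp.
Qed.

Lemma rank_in1_below A p : (0 < rank_in A p)%N -> exists2 y, y <= p & rank_in A y = 1%N.
Proof.
case pm: (rank_in A p) => [//|m] _; elim: m p pm => [|m IHm] p pm; first by exists p.
have [q _ [qp qm]] := rank_in_pred pm; have [y yq y1] := IHm q qm.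
by exists y => //; exact: le_trans yq (ltW qp).
Qed.

End Rank.

Lemma crown6_le_top (u v : 'I_6) : crown6_le v u -> v != u -> (3 <= u)%N.
Proof. by rewrite /crown6_le => /orP[/eqP ->|/and3P[_ -> _]]; rewrite ?eqxx. Qed.

Lemma crown6_top_common_lower_bound (u u' : 'I_6) :
  (3 <= u)%N -> (3 <= u')%N -> exists w : 'I_6, crown6_le w u && crown6_le w u'.
Proof.
case: u => [[|[|[|[|[|[|//]]]]]] ?]; case: u' => [[|[|[|[|[|[|//]]]]]] ?] //= _ _;
  first [ by exists (@Ordinal 6 0 isT) | by exists (@Ordinal 6 1 isT)
        | by exists (@Ordinal 6 2 isT) ].
Qed.

Section CrownBand.
Context {disp : Order.disp_t} {T : finPOrderType disp}.
Variable c : 'I_6 -> T.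
Hypothesis c_onto : forall p, p \in rank_band 0 1 <-> exists u, c u = p.
Hypothesis c_le : forall u v, (c u <= c v) = crown6_le u v.

Lemma rank1_crown_top (y : T) : rank y = 1%N -> exists2 u : 'I_6, (3 <= u)%N & c u = y.
Proof.
move=> y1; have [q _ [qy q0]] := rank_in_pred y1.
have [u yu] : exists u, c u = y by apply/c_onto; rewrite inE y1.
have [v qv] : exists v, c v = q by apply/c_onto; rewrite inE /rank q0.
exists u => //; apply: (@crown6_le_top u v).
- by rewrite -c_le yu qv ltW.
- by apply: contraTneq qy => vu; rewrite -qv -yu vu ltxx.
Qed.

Lemma rank_gt0_common_lower_bound (p p' : T) :
  (0 < rank p)%N -> (0 < rank p')%N -> exists x, (x <= p) && (x <= p').
Proof.
move=> /rank_in1_below[y yp /rank1_crown_top[u u3 yu]].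
move=> /rank_in1_below[y' yp' /rank1_crown_top[u' u'3 yu']].
have [w /andP[wu wu']] := crown6_top_common_lower_bound u3 u'3.
exists (c w); apply/andP; split.
- by apply: le_trans yp; rewrite -yu c_le.
- by apply: le_trans yp'; rewrite -yu' c_le.
Qed.

End CrownBand.

Section Tower.
Context {disp : Order.disp_t} {T : finPOrderType disp}.
Variables (Q : {set T}) (k : nat) (h : 'I_k.+1 * bool -> T).
Hypothesis h_onto : forall p, p \in Q <-> exists u, h u = p.
Hypothesis h_le : forall u v, (h u <= h v) = tower_le u v.

Lemma tower_bottom_min q c : q \in Q -> q <= h (ord0, c) -> q = h (ord0, c).
Proof. by case/h_onto => u <-; rewrite h_le /tower_le ltn0 orbF => /eqP ->. Qed.

Lemma tower_bottom_level0 c : h (ord0, c) \in level0_in Q.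
Proof.
rewrite inE; apply/andP; split; first by apply/h_onto; exists (ord0, c).
apply/eqP/rank_in_eq0 => q qQ; rewrite lt_def.
by apply/andP => -[q_ne /(tower_bottom_min qQ) q_eq]; rewrite q_eq eqxx in q_ne.
Qed.

Hypothesis h_inj : injective h.

Lemma retract_tower_bottom_no_lower_bound x :
  retract Q -> x <= h (ord0, false) -> x <= h (ord0, true) -> False.
Proof.
case=> g [g_mono g_Q g_id] x_lo x_hi.
have g_bottom c : x <= h (ord0, c) -> g x = h (ord0, c).
  move=> x_le; apply: tower_bottom_min (g_Q x) _.
  by rewrite -[h _]g_id ?g_mono //; apply/h_onto; eexists.
by have /h_inj[] := etrans (esym (g_bottom _ x_lo)) (g_bottom _ x_hi).
Qed.

End Tower.

Theorem lemma5p6 (disp : Order.disp_t) (T : finPOrderType disp) (Q : {set T}) :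
  six_stack (T := T) -> retract Q -> four_tower Q ->
  level 0 :&: level0_in Q != set0.
Proof.
move=> [n [n_gt0 [_ bands]]] retractQ [[|k] [//= _ [h [h_inj h_onto h_le]]]].
have [c [_ c_onto c_le]] := bands 0%N n_gt0.
have bottom_level0 := tower_bottom_level0 h_onto h_le.
apply/set0Pn.
have [a0|a_gt0] := posnP (rank (h (ord0, false))).
  by exists (h (ord0, false)); rewrite in_setI bottom_level0 andbT inE a0.
have [b0|b_gt0] := posnP (rank (h (ord0, true))).
  by exists (h (ord0, true)); rewrite in_setI bottom_level0 andbT inE b0.
have [x /andP[xa xb]] := rank_gt0_common_lower_bound c_onto c_le a_gt0 b_gt0.
by case: (retract_tower_bottom_no_lower_bound h_onto h_le h_inj retractQ xa xb).
Qed.
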